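(* Let $G$ be a simple graph with at least one edge, with edge set $E$ and any orientation of its edges. Then $\mathcal{H}(G)$ is reducible if and only if there is a partition $E=E_1\cup E_2$ (into two nonempty disjoint sets) such that for every pair of edges $e_1\in E_1$ and $e_2\in E_2$, either $e_1$ and $e_2$ are two edges of a common triangle of $G$, or $e_1$ and $e_2$ share no vertex.
   Context: For an oriented edge $e$ write $e^-$ for its tail and $e^+$ for its head. For distinct edges $e,e'$: $e\leftrightarrow e'$ means $e^+=e'^-$ or $e'^+=e^-$; $e\overset{\pm}{\sim}e'$ means $e^+=e'^+$ or $e^-=e'^-$; $e\vartriangle e'$ means $e,e'$ are two edges of a common triangle of $G$. $\triangle(e)$ is the number of triangles containing $e$. The Helmholtzian matrix $\mathcal{H}(G)=(h_{ee'})$ is indexed by edges, with $h_{ee}=\triangle(e)+2$, and for $e\ne e'$: $h_{ee'}=-1$ if $e\leftrightarrow e'$ and not $e\vartriangle e'$; $h_{ee'}=1$ if $e\overset{\pm}{\sim}e'$ and not $e\vartriangle e'$; $h_{ee'}=0$ otherwise. A symmetric square matrix $M$ is reducible if there is a permutation matrix $P$ with $P^{-1}MP=\begin{pmatrix}E&O\\O&F\end{pmatrix}$ for square (nonempty) blocks $E,F$; otherwise it is irreducible. *)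

From mathcomp Require Import all_boot all_order all_algebra all_fingroup.
Set Implicit Arguments. Unset Strict Implicit. Unset Printing Implicit Defensive.
Import GRing.Theory Num.Theory.
Local Open Scope ring_scope.

(* An oriented simple graph on a finite vertex type V is given by its set D
   of oriented edges (e.1 = tail e^-, e.2 = head e^+). *)
Definition oriented_simple (V : finType) (D : {set V * V}) : Prop :=
  (forall e, e \in D -> e.1 != e.2) /\
  (forall u v, (u, v) \in D -> (v, u) \notin D).

Definition adj (V : finType) (D : {set V * V}) (u v : V) : bool :=
  ((u, v) \in D) || ((v, u) \in D).

Definition ends (V : finType) (e : V * V) : {set V} := [set e.1; e.2].

Definition ntri (V : finType) (D : {set V * V}) (e : V * V) : nat :=
  #|[set w | adj D e.1 w && adj D e.2 w]|.

Definition cotri (V : finType) (D : {set V * V}) (e e' : V * V) : bool :=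
  (e != e') &&
  [exists x : V, exists y : V, exists z : V,
     [&& adj D x y, adj D y z, adj D x z,
         ends e == [set x; y] & ends e' == [set y; z]]].

Definition consec (V : finType) (e e' : V * V) : bool :=
  (e.2 == e'.1) || (e'.2 == e.1).

Definition samedir (V : finType) (e e' : V * V) : bool :=
  (e.2 == e'.2) || (e.1 == e'.1).

Definition helm_entry (V : finType) (D : {set V * V}) (e e' : V * V) : int :=
  if e == e' then (ntri D e)%:Z + 2
  else if consec e e' && ~~ cotri D e e' then -1
  else if samedir e e' && ~~ cotri D e e' then 1
  else 0.

Definition Helmholtzian (V : finType) (D : {set V * V}) : 'M[int]_#|D| :=
  \matrix_(i < #|D|, j < #|D|) helm_entry D (enum_val i) (enum_val j).

Definition reducible (R : comUnitRingType) (n : nat) (M : 'M[R]_n) : Prop :=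
  exists n1 n2 (h : n1 + n2 = n), (0 < n1)%N /\ (0 < n2)%N /\
  exists (s : 'S_n) (E : 'M[R]_n1) (F : 'M[R]_n2),
    invmx (perm_mx s) *m M *m perm_mx s = castmx (h, h) (block_mx E 0 0 F).

From mathcomp Require Import all_boot all_order all_algebra all_fingroup zify.
Set Implicit Arguments. Unset Strict Implicit. Unset Printing Implicit Defensive.
Local Open Scope ring_scope.

(* Conjugating by a permutation matrix relabels rows and columns by the same
   permutation, so a matrix is reducible exactly when its index set splits
   into two nonempty parts with all entries between them zero.  An
   off-diagonal entry of the Helmholtzian vanishes exactly when the two edges
   lie on a common triangle or share no vertex (two edges sharing a vertex are
   consecutive or share their head or their tail), so these splittings of the
   indices are the edge partitions of the statement. *)

Lemma exists_perm_prefix (n : nat) (A : {set 'I_n}) :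
  exists t : 'S_n, forall a, (t a \in A) = (a < #|A|)%N.
Proof.
pose s := enum A ++ enum (~: A).
have size_s : size s = n by rewrite size_cat -!cardE cardsC card_ord.
have uniq_s : uniq s.
  by rewrite cat_uniq !enum_uniq andbT; apply/hasPn => x; rewrite !mem_enum inE.
pose g (a : 'I_n) := nth a s a.
have g_inj : injective g.
  move=> a b; rewrite /g (set_nth_default a b) ?size_s //.
  by move/eqP; rewrite nth_uniq ?size_s // => /eqP/val_inj.
exists (perm g_inj) => a; rewrite permE /g /s nth_cat -cardE.
case: ltnP => [a_lt | a_ge]; first by rewrite -mem_enum mem_nth // -cardE.
have : nth a (enum (~: A)) (a - #|A|) \in enum (~: A).
  by apply: mem_nth; rewrite -cardE ltn_subLR // cardsC card_ord.
by rewrite mem_enum inE => /negbTE.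
Qed.

Section Reducibility.

Variables (R : comUnitRingType) (n : nat).

Lemma perm_conjmxE (M : 'M[R]_n) (s : 'S_n) i j :
  (invmx (perm_mx s) *m M *m perm_mx s) i j = M (s^-1 i)%g (s^-1 j)%g.
Proof.
have -> : invmx (perm_mx s) = perm_mx s^-1 :> 'M[R]_n.
  by rewrite -[RHS]mulmx1 -(mulmxV (unitmx_perm R s)) mulmxA -perm_mxM mulVg
    perm_mx1 mul1mx.
by rewrite -row_permE -[s in perm_mx s]invgK -col_permE !mxE.
Qed.

Lemma castmx_block_diagP n1 n2 (h : (n1 + n2 = n)%N) (N : 'M[R]_n) :
  (exists (E : 'M_n1) (F : 'M_n2), N = castmx (h, h) (block_mx E 0 0 F)) <->
  (forall a b : 'I_n, (a < n1 <= b)%N -> N a b = 0 /\ N b a = 0).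
Proof.
split=> [[E [F ->]] a b /andP[a_lt b_ge] | N0].
  have b_lt : (b - n1 < n2)%N by have := ltn_ord b; lia.
  have a_left : cast_ord (esym h) a = lshift n2 (Ordinal a_lt) by exact: val_inj.
  have b_right : cast_ord (esym h) b = rshift n1 (Ordinal b_lt).
    by apply: val_inj => /=; lia.
  by rewrite !castmxE a_left b_right block_mxEur block_mxEdl !mxE.
pose N' := castmx (esym h, esym h) N.
exists (ulsubmx N'), (drsubmx N'); rewrite -[N in LHS](castmxKV h h).
congr castmx; rewrite -[LHS]submxK; congr block_mx; apply/matrixP => i j;
  rewrite !mxE castmxE /=.
- by apply: (N0 _ _ _).1; rewrite /= ltn_ord leq_addr.
- by apply: (N0 _ _ _).2; rewrite /= ltn_ord leq_addr.
Qed.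

Lemma reducibleP (M : 'M[R]_n) :
  reducible M <-> exists A : {set 'I_n}, [/\ A != set0, ~: A != set0 &
    forall i j, i \in A -> j \notin A -> M i j = 0 /\ M j i = 0].
Proof.
split=> [[n1 [n2 [h [n1_gt0 [n2_gt0 [s [E [F conjM]]]]]]]] | [A [A0 CA0 MA]]].
  set N := invmx _ *m _ *m _ in conjM.
  have /castmx_block_diagP N0 : exists E F, N = castmx (h, h) (block_mx E 0 0 F).
    by exists E, F.
  have a0_lt : (0 < n)%N by rewrite -h; lia.
  have b0_lt : (n1 < n)%N by rewrite -h; lia.
  exists [set i | (s i < n1)%N]; split.
  - by apply/set0Pn; exists (s^-1 (Ordinal a0_lt))%g; rewrite inE permKV.
  - by apply/set0Pn; exists (s^-1 (Ordinal b0_lt))%g; rewrite !inE permKV ltnn.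
  move=> i j; rewrite !inE -leqNgt => i_lt j_ge.
  by have := N0 (s i) (s j); rewrite !perm_conjmxE !permK; apply; rewrite i_lt.
have [t tA] := exists_perm_prefix A.
have h : (#|A| + #|~: A| = n)%N by rewrite cardsC card_ord.
exists #|A|, #|~: A|, h; rewrite !card_gt0; do 2!split => //.
exists t^-1%g; apply/castmx_block_diagP => a b /andP[a_lt b_ge].
by rewrite !perm_conjmxE invgK; apply: MA; rewrite tA // -leqNgt.
Qed.

End Reducibility.

Lemma enum_val_partitionP (T : finType) (D : {set T}) (r : rel T) :
  (exists A : {set 'I_#|D|}, [/\ A != set0, ~: A != set0 &
    forall i j, i \in A -> j \notin A -> r (enum_val i) (enum_val j)]) <->
  (exists E1 : {set T}, [/\ E1 \subset D, E1 != set0, D :\: E1 != set0 &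
    forall e1 e2, e1 \in E1 -> e2 \in D :\: E1 -> r e1 e2]).
Proof.
split=> [[A [A0 CA0 rA]] | [E1 [sE1D E10 DE10 rE1]]].
  exists (enum_val @: A); split.
  - by apply/subsetP => _ /imsetP[i _ ->]; exact: enum_valP.
  - by rewrite imset_eq0.
  - case/set0Pn: CA0 => j jA; apply/set0Pn; exists (enum_val j).
    by rewrite inE enum_valP andbT (mem_imset _ _ (@enum_val_inj _ _)) -in_setC.
  move=> _ e2 /imsetP[i iA ->] /setDP[e2D e2A].
  rewrite -(enum_rankK_in e2D e2D) in e2A *; apply: rA => //.
  by apply: contra e2A => jA; exact: imset_f.
exists [set i | enum_val i \in E1]; split.
- case/set0Pn: E10 => e eE1; have eD := subsetP sE1D e eE1.
  by apply/set0Pn; exists (enum_rank_in eD e); rewrite inE enum_rankK_in.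
- case/set0Pn: DE10 => e /setDP[eD eE1].
  by apply/set0Pn; exists (enum_rank_in eD e); rewrite !inE enum_rankK_in.
by move=> i j; rewrite !inE => iE1 jE1; apply: rE1; rewrite // inE jE1 enum_valP.
Qed.

Lemma disjoint_ends (V : finType) (e e' : V * V) :
  [disjoint ends e & ends e'] = ~~ (consec e e' || samedir e e').
Proof.
rewrite /ends (@eq_disjoint _ _ (mem [:: e.1; e.2])) => [|x]; last by rewrite !inE.
rewrite !disjoint_cons eq_disjoint0 // /consec /samedir !inE (eq_sym e'.2) andbT.
by case: (e.1 == e'.1); case: (e.1 == e'.2); case: (e.2 == e'.1); case: (e.2 == _).
Qed.

Lemma adjC (V : finType) (D : {set V * V}) u v : adj D u v = adj D v u.
Proof. by rewrite /adj orbC. Qed.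

Lemma cotriC (V : finType) (D : {set V * V}) e e' :
  cotri D e e' = cotri D e' e.
Proof.
rewrite /cotri eq_sym; congr (_ && _).
apply/existsP/existsP => -[x /existsP[y /existsP[z /and5P[xy yz xz ee ee']]]].
all: exists z; apply/existsP; exists y; apply/existsP; exists x.
all: rewrite (adjC D z y) (adjC D y x) (adjC D z x) xy yz xz.
all: by rewrite [[set z; y]]setUC [[set y; x]]setUC ee ee'.
Qed.

Lemma helm_entry_eq0 (V : finType) (D : {set V * V}) e e' : e != e' ->
  (helm_entry D e e' == 0) = cotri D e e' || [disjoint ends e & ends e'].
Proof.
move=> ne; rewrite disjoint_ends /helm_entry (negbTE ne).
by case: (consec e e'); case: (samedir e e'); case: (cotri D e e').
Qed.

Lemma Helmholtzian_offdiag_eq0P (V : finType) (D : {set V * V}) (i j : 'I_#|D|) :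
  i != j ->
  (Helmholtzian D i j = 0 /\ Helmholtzian D j i = 0) <->
  cotri D (enum_val i) (enum_val j) || [disjoint ends (enum_val i) & ends (enum_val j)].
Proof.
move=> ij; have ne : enum_val i != enum_val j by rewrite (inj_eq enum_val_inj).
rewrite !mxE; split=> [[/eqP + _] | sep]; first by rewrite helm_entry_eq0.
split; apply/eqP; first by rewrite helm_entry_eq0.
by rewrite helm_entry_eq0 1?eq_sym // cotriC disjoint_sym.
Qed.

Theorem proposition3p1 (V : finType) (D : {set V * V}) :
  oriented_simple D -> D != set0 ->
  reducible (Helmholtzian D) <->
  exists E1 : {set V * V},
    [/\ E1 \subset D, E1 != set0, D :\: E1 != set0 &
      forall e1 e2, e1 \in E1 -> e2 \in D :\: E1 ->
        cotri D e1 e2 || [disjoint ends e1 & ends e2]].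
Proof.
move=> _ _; rewrite reducibleP.
rewrite -(enum_val_partitionP D (fun e e' => cotri D e e' || [disjoint ends e & ends e'])).
split=> -[A [A0 CA0 across]]; exists A; split=> // i j iA jA.
all: have ij : i != j by apply: contraNneq jA => <-.
- exact/(Helmholtzian_offdiag_eq0P ij)/across.
- exact/(Helmholtzian_offdiag_eq0P ij)/across.
Qed.
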